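(* The set of elements $(d,e;m)\in\mathcal{E}$ with $d\geq e$ whose vector $m$ has at most $7$ nonzero entries is finite, and consists exactly of $$(0,0;-1),\ (1,0;1),\ (1,1;1^{\times3}),\ (2,1;1^{\times5}),\ (2,2;2,1^{\times5}),$$ $$(3,1;1^{\times7}),\ (3,2;2^{\times2},1^{\times5}),\ (3,3;2^{\times4},1^{\times3}),\ (4,3;2^{\times6},1),\ (4,4;3,2^{\times6}).$$
   Context: Notation: $x^{\times l}$ denotes $x$ repeated $l$ times; trailing zeros of $m$ are ignored. The set $\mathcal{E}$: a Cremona transform of an integer tuple $(\delta;n_1,\dots,n_k)$ with $n_1\geq\dots\geq n_k$ is $(2\delta-n_1-n_2-n_3;\delta-n_2-n_3,\delta-n_1-n_3,\delta-n_1-n_2,n_4,\dots,n_k)$; a Cremona move is a Cremona transform followed by a permutation of the entries after the semicolon. $\mathcal{E}$ consists of $(0,0;-1)$ together with all integer tuples $(d,e;m_1,\dots,m_M)$ with $d,e\geq0$, $m_1\geq\dots\geq m_M\geq0$, satisfying $\sum m_i=2(d+e)-1$, $\sum m_i^2=2de+1$, and such that $(d+e-m_1;d-m_1,e-m_1,m_2,\dots,m_M)$ reduces to $(0;-1,0,\dots,0)$ by repeated Cremona moves. (Equivalently, classes $dS_1+eS_2-\sum m_iF_i$ in the $M$-fold blow-up of $S^2\times S^2$ represented by symplectically embedded $(-1)$-spheres.) $\mathcal{E}$ is symmetric under swapping $d$ and $e$. *)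

From Stdlib Require Import Relations.
From mathcomp Require Import all_boot all_order all_algebra.
Set Implicit Arguments. Unset Strict Implicit. Unset Printing Implicit Defensive.
Import Order.TTheory GRing.Theory Num.Theory.
Local Open Scope ring_scope.

(* A tuple (delta; n_1,...,n_k) is a pair (delta, [:: n_1; ...; n_k]). *)
Definition ituple := (int * seq int)%type.

(* Cremona transform of (delta; n1,...,nk), assuming n1 >= ... >= nk, k >= 3. *)
Definition cremona_transform (t : ituple) : option ituple :=
  match t.2 with
  | n1 :: n2 :: n3 :: rest =>
      Some (2 * t.1 - n1 - n2 - n3,
            [:: t.1 - n2 - n3; t.1 - n1 - n3; t.1 - n1 - n2] ++ rest)
  | _ => None
  end.

(* One Cremona move: (trailing zeros being ignored, the tuple may first be
   padded with zeros), order the entries nonincreasingly, apply the Cremona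
   transform, then permute the entries arbitrarily. *)
Definition cremona_move (t u : ituple) : Prop :=
  exists k : nat,
  exists v : seq int,
    cremona_transform (t.1, sort (>=%R) (t.2 ++ nseq k 0)) = Some (u.1, v)
    /\ perm_eq v u.2.

(* t reduces to (0; -1, 0, ..., 0) by repeated Cremona moves
   (equality up to zero entries and order of entries). *)
Definition reduces_to_exc (t : ituple) : Prop :=
  exists u, clos_refl_trans ituple cremona_move t u /\
            u.1 = 0 /\ perm_eq [seq x <- u.2 | x != 0] [:: -1].

(* Membership in the set E (m given as a list; trailing zeros ignored). *)
Definition in_calE (d e : int) (m : seq int) : Prop :=
  (d = 0 /\ e = 0 /\ exists k : nat, m = -1 :: nseq k 0) \/
  (0 <= d /\ 0 <= e /\ sorted (>=%R) m /\ all (fun x => 0 <= x) m /\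
      \sum_(x <- m) x = 2 * (d + e) - 1 /\
      \sum_(x <- m) x ^+ 2 = 2 * d * e + 1 /\
      reduces_to_exc (d + e - head 0 m, [:: d - head 0 m, e - head 0 m & behead m])).

Definition E_list : seq (int * int * seq int) :=
  [:: (0, 0, [:: -1]);
      (1, 0, [:: 1]);
      (1, 1, nseq 3 1);
      (2, 1, nseq 5 1);
      (2, 2, 2 :: nseq 5 1);
      (3, 1, nseq 7 1);
      (3, 2, nseq 2 2 ++ nseq 5 1);
      (3, 3, nseq 4 2 ++ nseq 3 1);
      (4, 3, nseq 6 2 ++ [:: 1]);
      (4, 4, 3 :: nseq 6 2)].

From Stdlib Require Import Relations.
From mathcomp Require Import all_boot all_order all_algebra.
From mathcomp Require Import zify.
Set Implicit Arguments. Unset Strict Implicit. Unset Printing Implicit Defensive.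
Import Order.TTheory GRing.Theory Num.Theory.
Local Open Scope ring_scope.

(** Only the two numerical conditions are needed to pin the list down.  By
Cauchy-Schwarz a vector with at most seven nonzero entries satisfies
[(2(d+e)-1)^2 <= 7 (2de+1) <= 7 ((d+e)^2/2 + 1)], whence [d + e <= 9], and a
search through the partitions of [2(d+e)-1] into at most seven parts leaves
exactly the listed vectors.  Conversely each listed vector is reduced to
[(0;-1)] by repeatedly applying the Cremona transform to its three largest
entries. *)

Lemma sort_cat_nseq0 (s r : seq int) a b c k :
  sort >=%R s = [:: a, b, c & r] -> 0 <= c ->
  sort >=%R (s ++ nseq k 0) = [:: a, b, c & sort >=%R (r ++ nseq k 0)].
Proof.
move=> sort_s c_ge0; apply: (sorted_eq ge_trans ge_anti).
- by apply: sort_sorted; exact: ge_total.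
- have := sort_sorted (@ge_total _ int) s.
  rewrite sort_s /= (path_sortedE ge_trans) => /andP[-> /andP[-> /andP[c_r _]]].
  rewrite (path_sortedE ge_trans) all_sort all_cat c_r /=.
  apply/andP; split; last by apply: sort_sorted; exact: ge_total.
  by apply/allP => x /nseqP[-> _].
- rewrite perm_sort (@perm_trans _ (sort >=%R s ++ nseq k 0)) //.
    by rewrite perm_cat2r perm_sym perm_sort.
  by rewrite sort_s /= !perm_cons perm_sym perm_sort.
Qed.

Lemma cremona_move_sorted (D : int) (s r : seq int) a b c k :
  sort >=%R s = [:: a, b, c & r] -> 0 <= c ->
  cremona_move (D, s ++ nseq k 0)
    (2 * D - a - b - c, [:: D - b - c; D - a - c; D - a - b] ++ r ++ nseq k 0).
Proof.
move=> sort_s c_ge0; exists 0%N.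
exists ([:: D - b - c; D - a - c; D - a - b] ++ sort >=%R (r ++ nseq k 0)).
by rewrite cats0 (sort_cat_nseq0 k sort_s c_ge0) /= !perm_cons perm_sort.
Qed.

(* The test [0 <= c] guarantees that padding with zeros does not change the
   three largest entries, so a successful search is valid for every padding. *)
Fixpoint exc_reducible (fuel : nat) (D : int) (s : seq int) : bool :=
  if fuel is fuel'.+1 then
    ((D == 0) && perm_eq [seq x <- s | x != 0] [:: -1]) ||
    if sort >=%R s is [:: a, b, c & r] then
      (0 <= c) &&
      exc_reducible fuel' (2 * D - a - b - c) ([:: D - b - c; D - a - c; D - a - b] ++ r)
    else false
  else false.

Lemma exc_reducible_sound fuel D s k :
  exc_reducible fuel D s -> reduces_to_exc (D, s ++ nseq k 0).
Proof.
elim: fuel D s => [//|fuel IH] D s /= /orP[/andP[/eqP D0 s_exc]|].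
  exists (D, s ++ nseq k 0); split; first exact: rt_refl.
  by rewrite filter_cat filter_nseq eqxx cats0.
case sort_s: (sort _ s) => [|a [|b [|c r]]] //= /andP[c_ge0 /IH[u [s_u u_exc]]].
exists u; split => //; apply: rt_trans s_u; apply: rt_step.
exact: cremona_move_sorted.
Qed.

Lemma sum_cat_nseq0 (F : int -> int) (s : seq int) k :
  F 0 = 0 -> \sum_(x <- s ++ nseq k 0) F x = \sum_(x <- s) F x.
Proof.
move=> F0; rewrite big_cat (@big1_seq _ _ _ _ (nseq k 0)) /= ?addr0 //.
by move=> x /nseqP[-> _].
Qed.

Lemma sorted_cat_nseq0 (s : seq int) k :
  sorted >=%R s -> all (fun x => 0 <= x) s -> sorted >=%R (s ++ nseq k 0).
Proof.
rewrite !(sorted_pairwise ge_trans) pairwise_cat => -> s_ge0 /=.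
apply/andP; split; first by apply/allrelP => x y /(allP s_ge0) ? /nseqP[-> _].
by elim: k => //= k ->; rewrite andbT; apply/allP => x /nseqP[-> _].
Qed.

(* Sums are written with [foldr] rather than [\sum], which is locked and would
   block [vm_compute]. *)
Definition calE_test (d e : int) (m : seq int) : bool :=
  [&& 0 <= d, 0 <= e, sorted >=%R m, all (fun x => 0 <= x) m,
      foldr +%R 0 m == 2 * (d + e) - 1,
      foldr +%R 0 [seq x ^+ 2 | x <- m] == 2 * d * e + 1 &
      exc_reducible 10 (d + e - head 0 m) [:: d - head 0 m, e - head 0 m & behead m]].

Lemma calE_testP d e m k : calE_test d e m -> in_calE d e (m ++ nseq k 0).
Proof.
move=> /and5P[d_ge0 e_ge0 m_sorted m_ge0 /and3P[/eqP sum_m /eqP sqr_m m_red]].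
rewrite !foldrE big_map in sum_m sqr_m.
right; do 2!split => //; split; first exact: sorted_cat_nseq0.
split; first by rewrite all_cat m_ge0; apply/allP => x /nseqP[-> _].
rewrite !sum_cat_nseq0 ?expr0n //; do 2!split => //.
case: m sum_m m_red {m_sorted m_ge0 sqr_m} => [|a m] sum_m m_red.
  by move: sum_m; rewrite big_nil; lia.
exact: (@exc_reducible_sound _ _ [:: d - a, e - a & m] k m_red).
Qed.

Local Open Scope nat_scope.

Fixpoint partitions (k n b : nat) : seq (seq nat) :=
  if n == 0 then [:: [::]] else
  if k is k'.+1 then
    [seq a :: p | a <- iota 1 (minn b n), p <- partitions k' (n - a) a]
  else [::].

Lemma mem_partitions k n b q :
  sorted geq q -> all (fun x => 0 < x) q -> size q <= k ->
  all (fun x => x <= b) q -> sumn q = n -> q \in partitions k n b.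
Proof.
elim: q k n b => [|a q IH] [|k] n b //= q_sorted; try by move=> _ _ _ <-.
move=> /andP[a_gt0 q_gt0] size_q /andP[a_le_b _] <-.
rewrite addn_eq0 gtn_eqF //=; apply/allpairsPdep; exists a, q.
split=> //; first by rewrite mem_iota; lia.
move: q_sorted; rewrite (path_sortedE (rev_trans leq_trans)) => /andP[q_le_a q_sorted].
by rewrite addKn; apply: IH.
Qed.

Definition sqrsumn (q : seq nat) : nat := sumn [seq x ^ 2 | x <- q].

Lemma AGM_sumn a q : 2 * (a * sumn q) <= sqrsumn q + size q * a ^ 2.
Proof.
elim: q => [|x q IH] /=; first by rewrite muln0.
have := (nat_Cauchy a x).1.
rewrite /sqrsumn /= -/(sqrsumn q); nia.
Qed.

Lemma Cauchy_Schwarz_sumn q : sumn q ^ 2 <= size q * sqrsumn q.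
Proof.
elim: q => //= x q IH; have := AGM_sumn x q.
rewrite /sqrsumn /= -/(sqrsumn q); nia.
Qed.

Lemma seven_parts_bound d e q :
  size q <= 7 -> sumn q = 2 * (d + e) - 1 -> sqrsumn q = 2 * d * e + 1 -> d + e <= 9.
Proof.
move=> size_q sum_q sqr_q; have := Cauchy_Schwarz_sumn q.
have := (nat_AGM2 d e).1; rewrite sum_q sqr_q; nia.
Qed.

Lemma partition_search :
  all (fun d => all (fun e => all (fun q =>
      (sqrsumn q == 2 * d * e + 1) ==> ((d%:Z, e%:Z, [seq x%:Z | x <- q]) \in E_list))
    (partitions 7 (2 * (d + e) - 1) (2 * (d + e) - 1))) (iota 0 d.+1)) (iota 0 10).
Proof. by vm_compute. Qed.

Lemma nat_solution_in_E_list d e q :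
  e <= d -> sorted geq q -> all (fun x => 0 < x) q -> size q <= 7 ->
  sumn q = 2 * (d + e) - 1 -> sqrsumn q = 2 * d * e + 1 ->
  (d%:Z, e%:Z, [seq x%:Z | x <- q]) \in E_list.
Proof.
move=> e_le_d q_sorted q_gt0 size_q sum_q sqr_q.
have de_le9 := seven_parts_bound size_q sum_q sqr_q.
have q_le_sum : all (fun x => x <= 2 * (d + e) - 1) q.
  by apply/allP => x x_q; rewrite -sum_q sumnE (big_rem _ x_q) leq_addr.
move: partition_search => /allP/(_ d); rewrite mem_iota => /(_ ltac:(lia)).
move=> /allP/(_ e); rewrite mem_iota => /(_ ltac:(lia)).
move=> /allP/(_ q (mem_partitions q_sorted q_gt0 size_q q_le_sum sum_q)).
by rewrite sqr_q eqxx.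
Qed.

Local Close Scope nat_scope.

Lemma nonneg_sorted_split (m : seq int) :
  sorted >=%R m -> all (fun x => 0 <= x) m ->
  exists (q : seq nat) (k : nat),
    m = [seq x%:Z | x <- q] ++ nseq k 0 /\ all (fun x => 0 < x)%N q.
Proof.
elim: m => [|x m IH] /=; first by exists [::], 0%N.
rewrite (path_sortedE ge_trans) => /andP[m_le_x m_sorted] /andP[x_ge0 m_ge0].
case: x x_ge0 m_le_x => [[|n]|//] _ m_le_x.
  have /all_pred1P m_0 : all (pred1 0) m.
    by apply/allP => y y_m; rewrite /= eq_le (allP m_ge0 y y_m) andbT; exact: (allP m_le_x).
  by exists [::], (size m).+1%N; rewrite m_0 size_nseq.
have [q [k [-> q_gt0]]] := IH m_sorted m_ge0.
by exists (n.+1%N :: q), k.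
Qed.

Lemma sumn_Posz (q : seq nat) : (sumn q)%:Z = \sum_(x <- [seq x%:Z | x <- q]) x.
Proof. by rewrite sumnE big_map (big_morph Posz PoszD (erefl 0%:Z)). Qed.

Lemma sqrsumn_Posz (q : seq nat) :
  (sqrsumn q)%:Z = \sum_(x <- [seq x%:Z | x <- q]) x ^+ 2.
Proof.
rewrite /sqrsumn sumn_Posz !big_map; apply: eq_bigr => x _.
by rewrite -natz natrX natz.
Qed.

Lemma solution_in_E_list (d e : int) (m : seq int) :
  0 <= e <= d -> sorted >=%R m -> all (fun x => 0 <= x) m ->
  (count (fun x : int => x != 0) m <= 7)%N ->
  \sum_(x <- m) x = 2 * (d + e) - 1 -> \sum_(x <- m) x ^+ 2 = 2 * d * e + 1 ->
  exists m0 (k : nat), (d, e, m0) \in E_list /\ m = m0 ++ nseq k 0.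
Proof.
move=> /andP[e_ge0 e_le_d] m_sorted m_ge0.
have [dn d_eq] : exists dn : nat, d = dn by exists `|d|%N; lia.
have [en e_eq] : exists en : nat, e = en by exists `|e|%N; lia.
subst d e.
have [q [k [m_eq q_gt0]]] := nonneg_sorted_split m_sorted m_ge0; subst m.
rewrite !sum_cat_nseq0 ?expr0n // -sumn_Posz -sqrsumn_Posz.
rewrite count_cat count_nseq eqxx mul0n addn0 count_map => size_q sum_q sqr_q.
exists [seq x%:Z | x <- q], k; split => //; apply: nat_solution_in_E_list.
- by rewrite -lez_nat.
- move: (cat_sorted2 m_sorted).1; rewrite sorted_map.
  by apply: sub_sorted => x y; rewrite /= lez_nat.
- exact: q_gt0.
- suff: all (preim Posz (fun x : int => x != 0)) q by rewrite all_count => /eqP <-.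
  by apply/allP => -[|x] /(allP q_gt0).
- lia.
- lia.
Qed.

Lemma E_list_tested :
  all (fun t => [&& calE_test t.1.1 t.1.2 t.2, t.1.2 <= t.1.1
                  & (count (fun x : int => x != 0) t.2 <= 7)%N]) (behead E_list).
Proof. by vm_compute. Qed.

Theorem lemma4p3 :
  forall (d e : int) (m : seq int),
    (in_calE d e m /\ e <= d /\ (count (fun x : int => x != 0%R) m <= 7)%N) <->
    exists d0 e0 m0 (k : nat),
      (d0, e0, m0) \in E_list /\ d = d0 /\ e = e0 /\ m = m0 ++ nseq k 0.
Proof.
move=> d e m; split.
  case=> [[[-> [-> [k ->]]] | [_ [e_ge0 [m_sorted [m_ge0 [sum_m [sqr_m _]]]]]]]].
    by exists 0, 0, [:: -1], k.
  case=> e_le_d m_count; have e_bounds : 0 <= e <= d by rewrite e_ge0.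
  have [m0 [k [m0_E ->]]] :=
    solution_in_E_list e_bounds m_sorted m_ge0 m_count sum_m sqr_m.
  by exists d, e, m0, k.
case=> d0 [e0 [m0 [k [t_E [-> [-> ->]]]]]].
rewrite count_cat count_nseq eqxx mul0n addn0.
move: t_E; rewrite /E_list in_cons => /predU1P[[-> -> ->] | t_E].
  by split; [left; do 2!split => //; exists k | ].
have /and3P[m0_test e0_le_d0 m0_count] := allP E_list_tested _ t_E.
by split; [exact: calE_testP | ].
Qed.
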